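(* Let $G$ be a graph on $n$ vertices, let $j,r$ be positive integers and let $p=p_r(G)$. Then $\sum_{S\in V(G)^j}|N(S)|^r\ge n^{j+r}p^{jr}$. If moreover $p>4jn^{-1/r}$, then $\sum_{S\in V(G)_j}|N(S)|^r\ge\frac{1}{2^{j+1}}n^{j+r}p^{jr}$.
   Context: All graphs are finite and simple. $p_r(G)=t_{K_{1,r}}(G)^{1/r}=\frac1n\left(\frac1n\sum_{v\in V(G)}d(v)^r\right)^{1/r}$ where $n=|G|$. For a set $W$ and positive integer $k$, $W^k$ is the set of sequences of length $k$ of elements of $W$ (repetitions allowed) and $W_k$ is the set of such sequences whose $k$ elements are pairwise distinct. For a sequence $S$ in $V(G)$, $N(S)$ is the set of vertices adjacent to every vertex of $S$. *)

From HB Require Import structures.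
From mathcomp Require Import all_boot all_order all_algebra.
From mathcomp Require Import all_classical all_reals all_analysis.
Set Implicit Arguments. Unset Strict Implicit. Unset Printing Implicit Defensive.
Import Order.TTheory GRing.Theory Num.Theory.
Local Open Scope ring_scope.

Definition simple_graph (T : finType) (e : rel T) : Prop :=
  symmetric e /\ irreflexive e.

Definition deg (T : finType) (e : rel T) (v : T) : nat := #|[set u | e v u]|.

Definition common_nbhd (T : finType) (e : rel T) (S : seq T) : {set T} :=
  [set v | all (fun s => e s v) S].

Definition p_r (R : realType) (T : finType) (e : rel T) (r : nat) : R :=
  (#|T|%:R)^-1 *
  (((#|T|%:R)^-1 * \sum_(v : T) ((deg e v)%:R : R) ^+ r) `^ ((r%:R : R)^-1)).

From HB Require Import structures.
From mathcomp Require Import all_boot all_order all_algebra.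
From mathcomp Require Import all_classical all_reals all_analysis.
From mathcomp Require Import ring lra.
Import Order.TTheory GRing.Theory Num.Theory.

(* Double counting the pairs (S, U) of a j-tuple and an r-tuple of vertices
   such that every vertex of S is adjacent to every vertex of U turns
   sum_S |N(S)|^r into sum_U |N(U)|^j, and the sum over injective S into
   sum_U |N(U)|^_j (falling factorial); for j = 1 it gives
   sum_U |N(U)| = sum_v d(v)^r = n^r * (n p^r).  The power-mean inequality
   over the n^r tuples U yields the first bound.  For the second,
   x^_j >= (x/2)^j - j^j, and the hypothesis on p says n p^r > (4j)^r, which
   makes the error term n^r j^j at most half of the main term. *)

Lemma card_all_tuples (T : finType) n (A : pred T) :
  #|[set t : n.-tuple T | all A t]| = #|A| ^ n.
Proof.
elim: n A => [|n IHn] A.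
  by rewrite (@fintype.eq_card1 _ [tuple]) // => t; rewrite [t]tuple0 inE.
rewrite -sum1dep_card (partition_big (@thead _ _) A) /= => [|t]; last first.
  by case/tupleP: t => x t /andP[].
rewrite expnS -sum_nat_const; apply: eq_bigr => x Ax.
rewrite -(IHn A) -sum1dep_card.
rewrite (reindex (fun t : n.-tuple T => [tuple of x :: t])) /=; last first.
  exists (fun t : n.+1.-tuple T => [tuple of behead t]) => [t _ | t /andP[_ /eqP <-]].
    exact: val_inj.
  by rewrite -tuple_eta.
by apply: eq_bigl => t; rewrite Ax theadE eqxx andbT.
Qed.

Section CommonNeighbourhood.
Variables (T : finType) (e : rel T).
Hypothesis e_sym : symmetric e.
Local Notation N := (common_nbhd e).

Lemma common_nbhd_allC (S U : seq T) :
  all (mem (N S)) U = all (mem (N U)) S.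
Proof.
apply/idP/idP => /allP sub; apply/allP => s sS; rewrite /= inE;
  apply/allP => u uU; move: (sub u uU); rewrite /= inE => /allP /(_ s sS);
  by rewrite e_sym.
Qed.

Lemma sumX_card_common_nbhd j r (P : pred (j.-tuple T)) :
  \sum_(S : j.-tuple T | P S) #|N S| ^ r
    = \sum_(U : r.-tuple T) #|[set S : j.-tuple T | P S & all (mem (N U)) S]|.
Proof.
transitivity (\sum_(S : j.-tuple T) \sum_(U : r.-tuple T)
                (P S && all (mem (N S)) U : nat)).
  rewrite big_mkcond; apply: eq_bigr => S _; case: (P S) => /=.
    by rewrite -card_all_tuples -sum1dep_card big_mkcond.
  by rewrite big1.
rewrite exchange_big; apply: eq_bigr => U _.
rewrite -sum1dep_card [RHS]big_mkcond; apply: eq_bigr => S _.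
by rewrite common_nbhd_allC; case: (_ && _).
Qed.

Lemma sumX_card_common_nbhdC j r :
  \sum_(S : j.-tuple T) #|N S| ^ r = \sum_(U : r.-tuple T) #|N U| ^ j.
Proof.
rewrite (sumX_card_common_nbhd _ _ xpredT); apply: eq_bigr => U _.
exact: card_all_tuples.
Qed.

Lemma sumX_card_common_nbhd_uniq j r :
  \sum_(S : j.-tuple T | uniq S) #|N S| ^ r
    = \sum_(U : r.-tuple T) #|N U| ^_ j.
Proof.
rewrite sumX_card_common_nbhd; apply: eq_bigr => U _.
by rewrite -card_uniq_tuples; apply: eq_card => S; rewrite !inE andbC.
Qed.

Lemma sum_card_common_nbhd r :
  \sum_(U : r.-tuple T) #|N U| = \sum_v deg e v ^ r.
Proof.
rewrite (eq_bigr (fun U : r.-tuple T => #|N U| ^ 1)) => [|U _]; last first.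
  by rewrite expn1.
rewrite -sumX_card_common_nbhdC (reindex (fun v => [tuple v])) /=.
  apply: eq_bigr => v _; congr (_ ^ _); apply: eq_card => u.
  by rewrite !inE /= andbT.
exists (@thead 0 T) => [v _ | t _]; first by rewrite theadE.
by case/tupleP: t => v t; rewrite [t]tuple0; apply: val_inj.
Qed.

End CommonNeighbourhood.

Local Open Scope ring_scope.

Lemma chebyshev_sum (R : realFieldType) (I : finType) (f g : I -> R) :
  (forall a b, 0 <= (f a - f b) * (g a - g b)) ->
  (\sum_i f i) * (\sum_i g i) <= #|I|%:R * \sum_i f i * g i.
Proof.
move=> similar.
have expand : \sum_a \sum_b (f a - f b) * (g a - g b)
    = 2 * (#|I|%:R * (\sum_i f i * g i) - (\sum_i f i) * (\sum_i g i)).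
  have split_ab a b : (f a - f b) * (g a - g b)
      = (f a * g a - f a * g b) + (f b * g b - f b * g a) by ring.
  under eq_bigr do under eq_bigr do rewrite split_ab.
  under eq_bigr do rewrite big_split.
  rewrite big_split [X in _ + X = _]exchange_big /= -mulr2n mulr_natl.
  congr (_ *+ 2); rewrite mulr_sumr mulr_suml -sumrB; apply: eq_bigr => a _.
  by rewrite sumrB sumr_const mulr_natl mulr_sumr.
rewrite -subr_ge0 -(pmulr_rge0 _ (ltr0n R 2)) -expand.
by apply: sumr_ge0 => a _; apply: sumr_ge0 => b _; apply: similar.
Qed.

Lemma subr_mul_subrX_ge0 (R : realDomainType) (u v : R) m :
  0 <= u -> 0 <= v -> 0 <= (u - v) * (u ^+ m - v ^+ m).
Proof.
move=> u0 v0; have [uv | vu] := leP u v.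
  by rewrite mulr_le0 // subr_le0 // lerXn2r.
by rewrite mulr_ge0 // subr_ge0 ?lerXn2r // ltW.
Qed.

Lemma power_mean_le (R : realFieldType) (I : finType) (x : I -> R) k :
  (forall i, 0 <= x i) ->
  #|I|%:R * ((\sum_i x i) / #|I|%:R) ^+ k <= \sum_i x i ^+ k.
Proof.
move=> x_ge0; set s := \sum_i x i; set N : R := #|I|%:R.
have mean_ge0 : 0 <= s / N by rewrite divr_ge0 ?sumr_ge0.
elim: k => [|k IHk]; first by rewrite expr0 mulr1 sumr_const.
rewrite exprS mulrCA (le_trans (ler_wpM2l mean_ge0 IHk)) //.
have [N0 | N_neq0] := eqVneq N 0.
  by rewrite N0 invr0 mulr0 mul0r; apply: sumr_ge0 => i _; rewrite exprn_ge0.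
rewrite mulrAC ler_pdivrMr ?lt0r ?N_neq0 ?ler0n // [leRHS]mulrC.
rewrite [X in _ <= _ * X](eq_bigr (fun i => x i * x i ^+ k)) => [|i _]; last exact: exprS.
apply: chebyshev_sum => a b; exact: subr_mul_subrX_ge0.
Qed.

Lemma leq_subX_ffact (x j : nat) : ((x - j) ^ j <= x ^_ j)%N.
Proof.
elim: j x => [|j IHj] x //; rewrite ffactnS expnS leq_mul ?leq_subr //.
by apply: leq_trans (IHj x.-1); rewrite subnS -subn1 subnAC subn1.
Qed.

Lemma ler_halfX_ffact (R : realFieldType) (x j : nat) :
  (x%:R / 2) ^+ j - j%:R ^+ j <= (x ^_ j)%:R :> R.
Proof.
have [large | small] := leqP (2 * j) x.
  apply: le_trans (_ : ((x - j) ^ j)%:R <= _); last by rewrite ler_nat leq_subX_ffact.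
  rewrite natrX lerBlDr -[leLHS]addr0 lerD ?exprn_ge0 //.
  rewrite lerXn2r ?nnegrE ?divr_ge0 // natrB; last by rewrite (leq_trans _ large) ?leq_pmull.
  by move: large; rewrite -(ler_nat R) natrM; lra.
rewrite (le_trans _ (ler0n _ _)) // subr_le0 lerXn2r ?nnegrE ?divr_ge0 //.
by move/ltnW: small; rewrite -(ler_nat R) natrM; lra.
Qed.

Lemma sum_ffact_ge (R : realFieldType) (I : finType) (y : I -> nat) j :
  (\sum_i (y i)%:R ^+ j) / 2 ^+ j - #|I|%:R * j%:R ^+ j
    <= \sum_i (y i ^_ j)%:R :> R.
Proof.
apply: le_trans (ler_sum _ (fun i _ => ler_halfX_ffact R (y i) j)).
rewrite sumrB sumr_const mulr_natl mulr_suml.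
by under [X in _ <= X - _]eq_bigr do rewrite expr_div_n.
Qed.

Lemma natr_sumX (R : pzSemiRingType) (I : finType) (P : pred I) (f : I -> nat) k :
  \sum_(i | P i) (f i)%:R ^+ k = (\sum_(i | P i) f i ^ k)%:R :> R.
Proof. by rewrite natr_sum; apply: eq_bigr => i _; rewrite natrX. Qed.

Lemma ler_divX2_sub (R : realFieldType) (s t c : R) k :
  t <= s -> 2 ^+ k.+1 * c <= t -> 2 ^- k.+1 * t <= s / 2 ^+ k - c.
Proof.
move=> le_ts le_ct.
have le_t_s : t / 2 ^+ k <= s / 2 ^+ k by rewrite ler_wpM2r ?invr_ge0 ?exprn_ge0.
have le_c_t : c <= 2 ^- k.+1 * t by rewrite ler_pdivlMl ?exprn_gt0.
have halve : t / 2 ^+ k = 2 * (2 ^- k.+1 * t).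
  by rewrite exprS; field; rewrite expf_neq0 ?pnatr_eq0.
lra.
Qed.

Lemma ler_pow2S_mul_exprn (R : numDomainType) (m : R) j :
  (0 < j)%N -> 4 * j%:R <= m -> 2 ^+ j.+1 * j%:R ^+ j <= m ^+ j.
Proof.
move=> j_gt0 le_4j_m; have m_ge0 : 0 <= m by apply: le_trans le_4j_m.
apply: le_trans (_ : (4 * j%:R) ^+ j <= _); last by rewrite lerXn2r ?nnegrE.
have -> : 4 = 2 * 2 :> R by rewrite -natrM.
rewrite !exprMn ler_wpM2r ?exprn_ge0 // exprS ler_wpM2r ?exprn_ge0 //.
by rewrite ler_eXnr // ler1n.
Qed.

Lemma expr_powR_inv (R : realType) (y : R) r :
  0 <= y -> (0 < r)%N -> (y `^ (r%:R)^-1) ^+ r = y.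
Proof.
move=> y_ge0 r_gt0; rewrite -powR_mulrn ?powR_ge0 // -powRrM mulVf ?powRr1 //.
by rewrite pnatr_eq0 -lt0n.
Qed.

Lemma ltr_mul_powRN_expr {R : realType} {a c y : R} {r : nat} :
  (0 < r)%N -> 0 <= a -> 0 < c ->
  a * c `^ (- (r%:R)^-1) < y -> a ^+ r < c * y ^+ r.
Proof.
move=> r_gt0 a_ge0 c_gt0 /(ltrXn2r r (mulr_ge0 a_ge0 (powR_ge0 _ _))).
rewrite -lt0n r_gt0 exprMn powRN exprVn expr_powR_inv ?ltW //.
by rewrite ltr_pdivrMr // mulrC.
Qed.

Lemma p_rX (R : realType) (T : finType) (e : rel T) r : (0 < r)%N ->
  p_r R e r ^+ r = (\sum_v (deg e v)%:R ^+ r) / #|T|%:R ^+ r.+1.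
Proof.
move=> r_gt0; rewrite exprMn expr_powR_inv ?mulr_ge0 ?invr_ge0 ?sumr_ge0 //.
by rewrite exprVn mulrA -invfM -exprSr mulrC.
Qed.

Lemma sum_card_common_nbhd_p_r (R : realType) (T : finType) (e : rel T) r :
  symmetric e -> (0 < #|T|)%N -> (0 < r)%N ->
  \sum_(U : r.-tuple T) (#|common_nbhd e U|%:R : R)
    = #|T|%:R ^+ r * (#|T|%:R * p_r R e r ^+ r).
Proof.
move=> e_sym n_gt0 r_gt0; set n : R := #|T|%:R.
have n_neq0 : n != 0 by rewrite pnatr_eq0 -lt0n.
rewrite -natr_sum sum_card_common_nbhd // -natr_sumX p_rX // -/n exprS invfM.
by rewrite [n * _]mulrCA mulVKf // mulrCA divff ?mulr1 ?expf_neq0.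
Qed.

Theorem lemma3p5 (R : realType) (T : finType) (e : rel T)
  (hG : simple_graph e) (hn : (0 < #|T|)%N) (j r : nat)
  (hj : (0 < j)%N) (hr : (0 < r)%N) :
  (#|T|%:R : R) ^+ (j + r) * (p_r R e r) ^+ (j * r)
    <= \sum_(S : j.-tuple T) ((#|common_nbhd e S|)%:R : R) ^+ r
  /\
  (4 * j%:R * (#|T|%:R : R) `^ (- (r%:R)^-1) < p_r R e r ->
   (2 ^+ (j + 1))^-1 * (#|T|%:R : R) ^+ (j + r) * (p_r R e r) ^+ (j * r)
    <= \sum_(S : j.-tuple T | uniq S) ((#|common_nbhd e S|)%:R : R) ^+ r).
Proof.
have e_sym : symmetric e by case: hG.
set n : R := #|T|%:R; set N := n ^+ r; set m := n * p_r R e r ^+ r.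
have n_gt0 : 0 < n by rewrite ltr0n.
have main_term : n ^+ (j + r) * p_r R e r ^+ (j * r) = N * m ^+ j.
  by rewrite /m [(n * _) ^+ j]exprMn -exprM mulnC exprD /N mulrCA mulrA.
have part1 : N * m ^+ j <= \sum_(U : r.-tuple T) (#|common_nbhd e U|%:R : R) ^+ j.
  have := @power_mean_le R _ _ j (fun U : r.-tuple T => ler0n R #|common_nbhd e U|).
  rewrite card_tuple natrX sum_card_common_nbhd_p_r // -/n -/N -/m.
  by rewrite mulrAC divff ?mul1r ?expf_neq0 ?lt0r_neq0.
split; first by rewrite main_term natr_sumX sumX_card_common_nbhdC // -natr_sumX.
have four_j_ge0 : 0 <= 4 * j%:R :> R by rewrite mulr_ge0.
move=> /(ltr_mul_powRN_expr hr four_j_ge0 n_gt0) large_m.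
have le_4j_m : 4 * j%:R <= m.
  by rewrite ltW // (le_lt_trans _ large_m) // ler_eXnr // -natrM ler1n muln_gt0.
rewrite -mulrA main_term natr_sumX sumX_card_common_nbhd_uniq // natr_sum.
apply: le_trans (sum_ffact_ge _ _ _ _); rewrite card_tuple natrX -/n -/N addn1.
apply: ler_divX2_sub part1 _.
by rewrite mulrCA ler_wpM2l ?exprn_ge0 ?ler0n // ler_pow2S_mul_exprn.
Qed.
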